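(* The full subcategory $\mathsf{Cat}_{\mathrm{sep}}(\mathbb T)$ of L-separated $\mathbb T$-categories is an epi-reflective subcategory of $\mathsf{Cat}(\mathbb T)$, where for each $\mathbb T$-category $X$ the reflection map is the (corestricted) Yoneda functor $y_X:X\to y_X(X)$, with $y_X(X)\subseteq\hat X$ carrying the induced structure. Hence limits of L-separated $\mathbb T$-categories are formed in $\mathsf{Cat}(\mathbb T)$, while colimits are obtained by reflecting the colimit formed in $\mathsf{Cat}(\mathbb T)$. The epimorphisms in $\mathsf{Cat}_{\mathrm{sep}}(\mathbb T)$ are precisely the L-dense $\mathbb T$-functors.
   Context: Let $\mathsf V=(\mathsf V,\otimes,k)$ be a commutative unital quantale (complete lattice, commutative associative $\otimes$ with neutral $k$, $u\otimes(-)$ preserving suprema), internal hom $z\le u\multimap v\iff z\otimes u\le v$. A $\mathsf V$-relation $r$ from $X$ to $Y$ is a map $X\times Y\to\mathsf V$; composition $(s\cdot r)(x,z)=\bigvee_y r(x,y)\otimes s(y,z)$, converse $r^\circ(y,x)=r(x,y)$, pointwise order; a map $f$ is the relation $f(x,y)=k$ if $f(x)=y$, $\bot$ otherwise. Let $\mathbb T=(T,e,m)$ be a Set-monad with $T1=1$, $T$ sending pullbacks to weak pullbacks and each naturality square of $m$ a weak pullback, and $\xi:T\mathsf V\to\mathsf V$ with $\xi e_{\mathsf V}=1$, $\xi\cdot T\xi=\xi\cdot m_{\mathsf V}$, $\xi\cdot T(\otimes)=\otimes\cdot\langle\xi T\pi_1,\xi T\pi_2\rangle$, $\xi\cdot Tk=k$,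 and such that $\varphi\mapsto\xi\cdot T\varphi$, $\mathsf V^X\to\mathsf V^{TX}$, is natural w.r.t. the monotone maps $P_{\mathsf V}f(\varphi)(y)=\bigvee_{f(x)=y}\varphi(x)$ (a strict topological theory). For a relation $r$ from $X$ to $Y$ let $T_\xi r(\mathfrak x,\mathfrak y)=\bigvee\{\xi(Tr(\mathfrak w))\mid\mathfrak w\in T(X\times Y),T\pi_1\mathfrak w=\mathfrak x,T\pi_2\mathfrak w=\mathfrak y\}$. A $\mathbb T$-relation from $X$ to $Y$ is a $\mathsf V$-relation from $TX$ to $Y$; Kleisli composition $b\circ a=b\cdot T_\xi a\cdot m_X^\circ$. A $\mathbb T$-category $(X,a)$ has $k\le a(e_X(x),x)$ and $a\circ a\le a$; a $\mathbb T$-functor $f:(X,a)\to(Y,b)$ satisfies $a(\mathfrak x,x)\le b(Tf(\mathfrak x),f(x))$; $\mathsf{Cat}(\mathbb T)$ is the resulting category; subsets carry the induced structure. For a $\mathbb T$-functor $f:X\to(Y,b)$: $f_*(\mathfrak x,y)=b(Tf(\mathfrak x),y)$, $f^*(\mathfrak y,x)=b(\mathfrak y,f(x))$; $f$ is L-dense if $f_*\circ f^*=b$. For $\mathbb T$-functors $f,g:Z\to(X,a)$, $f\le g$ iff $k\le a(e_X(f(z)),g(z))$ for all $z$, $f\cong g$ iff $f\le g\le f$; $X$ is L-separated if $f\cong g$ implies $f=g$ for all such $f,g$. Yoneda: $\mathsf V$ is a $\mathbb T$-category with $\hom_\xi(\mathfrak v,v)=\xi(\mathfrak v)\multimap v$;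 $|X|=(TX,m_X)$; $|X|\multimap\mathsf V$ is the set of $\mathbb T$-functors $|X|\to\mathsf V$ with structure $[m_X,\hom_\xi](\mathfrak p,h)=\bigwedge\{\xi(T\mathrm{ev}(\mathfrak q))\multimap h(m_X(T\pi_1\mathfrak q))\mid\mathfrak q\in T(TX\times(|X|\multimap\mathsf V)),T\pi_2\mathfrak q=\mathfrak p\}$, $\mathrm{ev}(\mathfrak x,\varphi)=\varphi(\mathfrak x)$. With $r(\mathfrak x,\mathfrak y)=\bigvee_{m_X(\mathfrak X)=\mathfrak x}T_\xi a(\mathfrak X,\mathfrak y)$, $X^{\mathrm{op}}=(TX,c)$ with $c(\mathfrak X,\mathfrak y)=T_\xi(r^\circ)(\mathfrak X,e_{TX}(\mathfrak y))$. $\hat X\subseteq|X|\multimap\mathsf V$ consists of those $\psi$ that are also $\mathbb T$-functors $X^{\mathrm{op}}\to\mathsf V$ (induced structure); $y_X:X\to\hat X$, $y_X(x)(\mathfrak x)=a(\mathfrak x,x)$. *)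

Record Quantale : Type := {
  qV :> Type;
  qle : qV -> qV -> Prop;
  qsup : (qV -> Prop) -> qV;
  qten : qV -> qV -> qV;
  qk : qV;
  qle_refl : forall u, qle u u;
  qle_trans : forall u v w, qle u v -> qle v w -> qle u w;
  qle_antisym : forall u v, qle u v -> qle v u -> u = v;
  qsup_ub : forall (S : qV -> Prop) u, S u -> qle u (qsup S);
  qsup_least : forall (S : qV -> Prop) w, (forall u, S u -> qle u w) -> qle (qsup S) w;
  qten_comm : forall u v, qten u v = qten v u;
  qten_assoc : forall u v w, qten u (qten v w) = qten (qten u v) w;
  qten_k : forall u, qten qk u = u;
  qten_sup : forall u (S : qV -> Prop),
      qten u (qsup S) = qsup (fun w => exists v, S v /\ w = qten u v)
}.

Arguments qle {_}. Arguments qsup {_}. Arguments qten {_}. Arguments qk {_}.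

Definition qbot {Q : Quantale} : Q := qsup (fun _ => False).
Definition qinf {Q : Quantale} (S : Q -> Prop) : Q :=
  qsup (fun z => forall v, S v -> qle z v).
Definition qimp {Q : Quantale} (u v : Q) : Q := qsup (fun z => qle (qten z u) v).

Record SetMonad : Type := {
  mT : Type -> Type;
  mmap : forall A B : Type, (A -> B) -> mT A -> mT B;
  meta : forall A : Type, A -> mT A;
  mmu : forall A : Type, mT (mT A) -> mT A;
  mmap_id : forall A (t : mT A), mmap A A (fun x => x) t = t;
  mmap_comp : forall A B C (f : A -> B) (g : B -> C) (t : mT A),
      mmap A C (fun x => g (f x)) t = mmap B C g (mmap A B f t);
  meta_nat : forall A B (f : A -> B) (x : A), mmap A B f (meta A x) = meta B (f x);
  mmu_nat : forall A B (f : A -> B) (t : mT (mT A)),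
      mmap A B f (mmu A t) = mmu B (mmap (mT A) (mT B) (mmap A B f) t);
  mmu_meta : forall A (t : mT A), mmu A (meta (mT A) t) = t;
  mmu_mmap_meta : forall A (t : mT A), mmu A (mmap A (mT A) (meta A) t) = t;
  mmu_assoc : forall A (t : mT (mT (mT A))),
      mmu A (mmu (mT A) t) = mmu A (mmap (mT (mT A)) (mT A) (mmu A) t)
}.

Arguments mmap {_ _ _}. Arguments meta {_ _}. Arguments mmu {_ _}.

Section MonadConds.
Context {M : SetMonad}.
Local Notation T := (mT M).

Definition T_one : Prop := forall a b : T unit, a = b.

Definition T_weak_pullbacks : Prop :=
  forall (A B C : Type) (f : A -> C) (g : B -> C) (ta : T A) (tb : T B),
    mmap f ta = mmap g tb ->
    exists tp : T {p : A * B | f (fst p) = g (snd p)},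
      mmap (fun p => fst (proj1_sig p)) tp = ta /\
      mmap (fun p => snd (proj1_sig p)) tp = tb.

Definition mu_weak_pullbacks : Prop :=
  forall (A B : Type) (f : A -> B) (ta : T A) (ttb : T (T B)),
    mmap f ta = mmu ttb ->
    exists tta : T (T A), mmu tta = ta /\ mmap (mmap f) tta = ttb.
End MonadConds.

Definition PV {Q : Quantale} {X Y : Type} (f : X -> Y) (phi : X -> Q) : Y -> Q :=
  fun y => qsup (fun w => exists x, f x = y /\ w = phi x).

Record TopTheory (Q : Quantale) (M : SetMonad) : Type := {
  xi : mT M Q -> Q;
  xi_eta : forall v : Q, xi (meta v) = v;
  xi_mu : forall t : mT M (mT M Q), xi (mmap xi t) = xi (mmu t);
  xi_ten : forall t : mT M (Q * Q),
      xi (mmap (fun p => qten (fst p) (snd p)) t)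
      = qten (xi (mmap fst t)) (xi (mmap snd t));
  xi_k : forall t : mT M unit, xi (mmap (fun _ => qk) t) = qk;
  xi_nat : forall (X Y : Type) (f : X -> Y) (phi : X -> Q) (ty : mT M Y),
      PV (mmap f) (fun tx => xi (mmap phi tx)) ty = xi (mmap (PV f phi) ty)
}.
Arguments xi {_ _}.

Section TCats.
Context {Q : Quantale} {M : SetMonad}.
Local Notation T := (mT M).

Definition Vrel (X Y : Type) := X -> Y -> Q.
Definition rcomp {X Y Z : Type} (s : Vrel Y Z) (r : Vrel X Y) : Vrel X Z :=
  fun x z => qsup (fun w => exists y, w = qten (r x y) (s y z)).
Definition rconv {X Y : Type} (r : Vrel X Y) : Vrel Y X := fun y x => r x y.
Definition rgraph {X Y : Type} (f : X -> Y) : Vrel X Y :=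
  fun x y => qsup (fun w => f x = y /\ w = qk).
Definition rle {X Y : Type} (r s : Vrel X Y) : Prop :=
  forall x y, qle (r x y) (s x y).

Definition Txi (Th : TopTheory Q M) {X Y : Type} (r : Vrel X Y) : Vrel (T X) (T Y) :=
  fun tx ty => qsup (fun w => exists tw : T (X * Y),
      mmap fst tw = tx /\ mmap snd tw = ty /\
      w = xi Th (mmap (fun p => r (fst p) (snd p)) tw)).

Definition Trel (X Y : Type) := Vrel (T X) Y.
Definition kcomp (Th : TopTheory Q M) {X Y Z : Type} (b : Trel Y Z) (a : Trel X Y)
  : Trel X Z :=
  rcomp b (rcomp (Txi Th a) (rconv (rgraph (@mmu M X)))).

Record TGraph : Type := { tcar : Type; tstr : Trel tcar tcar }.

Definition is_TCat (Th : TopTheory Q M) (X : TGraph) : Prop :=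
  (forall x : tcar X, qle qk (tstr X (meta x) x)) /\
  rle (kcomp Th (tstr X) (tstr X)) (tstr X).

Definition is_TFun (X Y : TGraph) (f : tcar X -> tcar Y) : Prop :=
  forall (tx : T (tcar X)) (x : tcar X), qle (tstr X tx x) (tstr Y (mmap f tx) (f x)).

Definition subTG (X : TGraph) (P : tcar X -> Prop) : TGraph :=
  {| tcar := {x : tcar X | P x};
     tstr := fun t s => tstr X (mmap (@proj1_sig _ _) t) (proj1_sig s) |}.

Definition fdown {X Y : TGraph} (f : tcar X -> tcar Y) : Trel (tcar X) (tcar Y) :=
  fun tx y => tstr Y (mmap f tx) y.
Definition fup {X Y : TGraph} (f : tcar X -> tcar Y) : Trel (tcar Y) (tcar X) :=
  fun ty x => tstr Y ty (f x).
Definition L_dense (Th : TopTheory Q M) (X Y : TGraph) (f : tcar X -> tcar Y) : Prop :=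
  forall ty y, kcomp Th (@fdown X Y f) (@fup X Y f) ty y = tstr Y ty y.

Definition TFle (X Z : TGraph) (f g : tcar Z -> tcar X) : Prop :=
  forall z, qle qk (tstr X (meta (f z)) (g z)).
Definition L_separated (Th : TopTheory Q M) (X : TGraph) : Prop :=
  forall (Z : TGraph), is_TCat Th Z ->
  forall f g : tcar Z -> tcar X, is_TFun Z X f -> is_TFun Z X g ->
    TFle X Z f g -> TFle X Z g f -> forall z, f z = g z.

Definition Vgraph (Th : TopTheory Q M) : TGraph :=
  {| tcar := Q; tstr := fun tv v => qimp (xi Th tv) v |}.
Definition freeTG (X : TGraph) : TGraph :=
  {| tcar := T (tcar X); tstr := rgraph (@mmu M (tcar X)) |}.
Definition LVcar (Th : TopTheory Q M) (X : TGraph) : Type :=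
  {phi : T (tcar X) -> Q | is_TFun (freeTG X) (Vgraph Th) phi}.
Definition LV (Th : TopTheory Q M) (X : TGraph) : TGraph :=
  {| tcar := LVcar Th X;
     tstr := fun tp h => qinf (fun w =>
        exists tq : T (T (tcar X) * LVcar Th X),
          mmap snd tq = tp /\
          w = qimp (xi Th (mmap (fun p => proj1_sig (snd p) (fst p)) tq))
                   (proj1_sig h (mmu (mmap fst tq)))) |}.
Definition rYon (Th : TopTheory Q M) (X : TGraph) : Vrel (T (tcar X)) (T (tcar X)) :=
  fun tx ty => qsup (fun w => exists tX : T (T (tcar X)),
     mmu tX = tx /\ w = Txi Th (tstr X) tX ty).
Definition Xop (Th : TopTheory Q M) (X : TGraph) : TGraph :=
  {| tcar := T (tcar X);
     tstr := fun tX ty => Txi Th (rconv (rYon Th X)) tX (meta ty) |}.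
Definition Hat (Th : TopTheory Q M) (X : TGraph) : TGraph :=
  subTG (LV Th X) (fun psi => is_TFun (Xop Th X) (Vgraph Th) (proj1_sig psi)).
Definition yoneda (X : TGraph) (x : tcar X) : T (tcar X) -> Q := fun tx => tstr X tx x.
Definition YX (Th : TopTheory Q M) (X : TGraph) : TGraph :=
  subTG (Hat Th X) (fun psi => exists x, proj1_sig (proj1_sig psi) = yoneda X x).
Definition is_yoneda_corestr (Th : TopTheory Q M) (X : TGraph)
  (yc : tcar X -> tcar (YX Th X)) : Prop :=
  forall x, proj1_sig (proj1_sig (proj1_sig (yc x))) = yoneda X x.

(** ** Categorical notions (in the full subcategory of Cat(T) given by P) *)
Definition is_epi_in (Th : TopTheory Q M) (P : TGraph -> Prop) (X Y : TGraph)
  (f : tcar X -> tcar Y) : Prop :=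
  forall Z : TGraph, is_TCat Th Z -> P Z ->
  forall g h : tcar Y -> tcar Z, is_TFun Y Z g -> is_TFun Y Z h ->
    (forall x, g (f x) = h (f x)) -> forall y, g y = h y.

Definition is_reflection_in (Th : TopTheory Q M) (P : TGraph -> Prop) (X R : TGraph)
  (r : tcar X -> tcar R) : Prop :=
  is_TCat Th R /\ P R /\ is_TFun X R r /\
  forall Z : TGraph, is_TCat Th Z -> P Z ->
  forall f : tcar X -> tcar Z, is_TFun X Z f ->
    exists g : tcar R -> tcar Z, is_TFun R Z g /\ (forall x, g (r x) = f x) /\
      forall g' : tcar R -> tcar Z, is_TFun R Z g' -> (forall x, g' (r x) = f x) ->
        forall w, g' w = g w.

Record Diagram : Type := {
  dI : Type; dE : Type; dsrc : dE -> dI; dtgt : dE -> dI;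
  dobj : dI -> TGraph;
  dmor : forall e : dE, tcar (dobj (dsrc e)) -> tcar (dobj (dtgt e)) }.

Definition diagram_in (Th : TopTheory Q M) (P : TGraph -> Prop) (D : Diagram) : Prop :=
  (forall i, is_TCat Th (dobj D i) /\ P (dobj D i)) /\
  (forall e, is_TFun _ _ (dmor D e)).

Definition is_cone (D : Diagram) (L : TGraph) (p : forall i, tcar L -> tcar (dobj D i))
  : Prop :=
  (forall i, is_TFun L (dobj D i) (p i)) /\
  (forall e x, dmor D e (p (dsrc D e) x) = p (dtgt D e) x).

Definition is_limit_in (Th : TopTheory Q M) (P : TGraph -> Prop) (D : Diagram)
  (L : TGraph) (p : forall i, tcar L -> tcar (dobj D i)) : Prop :=
  is_TCat Th L /\ P L /\ is_cone D L p /\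
  forall Z : TGraph, is_TCat Th Z -> P Z ->
  forall q : forall i, tcar Z -> tcar (dobj D i), is_cone D Z q ->
    exists u : tcar Z -> tcar L, is_TFun Z L u /\ (forall i z, p i (u z) = q i z) /\
      forall u', is_TFun Z L u' -> (forall i z, p i (u' z) = q i z) ->
        forall z, u' z = u z.

Definition is_cocone (D : Diagram) (C : TGraph) (c : forall i, tcar (dobj D i) -> tcar C)
  : Prop :=
  (forall i, is_TFun (dobj D i) C (c i)) /\
  (forall e x, c (dtgt D e) (dmor D e x) = c (dsrc D e) x).

Definition is_colimit_in (Th : TopTheory Q M) (P : TGraph -> Prop) (D : Diagram)
  (C : TGraph) (c : forall i, tcar (dobj D i) -> tcar C) : Prop :=
  is_TCat Th C /\ P C /\ is_cocone D C c /\
  forall Z : TGraph, is_TCat Th Z -> P Z ->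
  forall q : forall i, tcar (dobj D i) -> tcar Z, is_cocone D Z q ->
    exists u : tcar C -> tcar Z, is_TFun C Z u /\ (forall i x, u (c i x) = q i x) /\
      forall u', is_TFun C Z u' -> (forall i x, u' (c i x) = q i x) ->
        forall w, u' w = u w.

End TCats.

(** L-separation is antisymmetry of the underlying order [k <= a(e x, y)] of a
    T-category.  By the Yoneda lemma (which needs that T preserves weak
    pullbacks) the corestriction [y_X : X -> y_X(X)] is fully faithful and
    surjective, so [y_X(X)] is a T-category in which isomorphic points have
    equal Yoneda images and hence coincide; every T-functor from X into an
    L-separated T-category then factors uniquely through [y_X].  Limits of
    L-separated T-categories are L-separated because the limit projections are
    jointly monic, and a reflective subcategory obtains colimits by reflecting.
    An L-dense f is epi because [g o f = h o f] forces [h <= g].  Conversely, if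
    f is epi then the T-functors [a(ty, -)] and the extension of [a(ty, f -)]
    along f into the L-separated T-category V agree on the image of f, hence
    everywhere, and this is the missing inequality of L-density. *)

From Stdlib Require Import FunctionalExtensionality ProofIrrelevance ClassicalEpsilon.

Section QuantaleFacts.
Context {Q : Quantale}.

(* [u (x) -] preserves the supremum [v'] of [{v, v'}]. *)
Lemma qten_mono_r (u v v' : Q) : qle v v' -> qle (qten u v) (qten u v').
Proof.
  intro H.
  assert (Hsup : qsup (fun w => w = v \/ w = v') = v').
  { apply qle_antisym.
    - apply qsup_least; intros w [-> | ->]; [exact H | apply qle_refl].
    - apply qsup_ub; right; reflexivity. }
  rewrite <- Hsup, qten_sup. apply qsup_ub. exists v; split; [left |]; reflexivity.
Qed.

Lemma qten_mono_l (u u' v : Q) : qle u u' -> qle (qten u v) (qten u' v).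
Proof. intro H. rewrite (qten_comm _ u), (qten_comm _ u'). now apply qten_mono_r. Qed.

Lemma qten_mono (u u' v v' : Q) : qle u u' -> qle v v' -> qle (qten u v) (qten u' v').
Proof. intros Hu Hv. apply qle_trans with (qten u' v); [apply qten_mono_l | apply qten_mono_r]; assumption. Qed.

Lemma qten_k_r (u : Q) : qten u qk = u.
Proof. rewrite qten_comm; apply qten_k. Qed.

Lemma qten_supr_le (u w : Q) (S : Q -> Prop) :
  (forall s, S s -> qle (qten u s) w) -> qle (qten u (qsup S)) w.
Proof. intro H. rewrite qten_sup. apply qsup_least. intros w' [v [Hv ->]]. auto. Qed.

Lemma qten_supl_le (u w : Q) (S : Q -> Prop) :
  (forall s, S s -> qle (qten s u) w) -> qle (qten (qsup S) u) w.
Proof. intro H. rewrite qten_comm. apply qten_supr_le. intros s Hs. rewrite qten_comm; auto. Qed.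

Lemma qimp_intro (z u v : Q) : qle (qten z u) v -> qle z (qimp u v).
Proof. intro H. unfold qimp. apply qsup_ub. exact H. Qed.

Lemma qimp_counit (u v : Q) : qle (qten (qimp u v) u) v.
Proof. unfold qimp. apply qten_supl_le. auto. Qed.

Lemma qimp_elim (z u v : Q) : qle z (qimp u v) -> qle (qten z u) v.
Proof. intro H. eapply qle_trans; [apply qten_mono_l; exact H | apply qimp_counit]. Qed.

Lemma qimp_le_k (u v : Q) : qle qk u -> qle (qimp u v) v.
Proof.
  intro H. eapply qle_trans; [| apply (qimp_counit u v)].
  rewrite <- (qten_k_r (qimp u v)) at 1. now apply qten_mono_r.
Qed.

Lemma qinf_lb (S : Q -> Prop) v : S v -> qle (qinf S) v.
Proof. intro H. unfold qinf. apply qsup_least. auto. Qed.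

Lemma qinf_glb (S : Q -> Prop) z : (forall v, S v -> qle z v) -> qle z (qinf S).
Proof. intro H. unfold qinf. apply qsup_ub. exact H. Qed.

End QuantaleFacts.

Section MonadFacts.
Context {M : SetMonad}.

Lemma mmap_mmap A B C (f : A -> B) (g : B -> C) (t : mT M A) :
  mmap g (mmap f t) = mmap (fun x => g (f x)) t.
Proof. symmetry; apply mmap_comp. Qed.

Lemma mmap_ext A B (f g : A -> B) (t : mT M A) :
  (forall x, f x = g x) -> mmap f t = mmap g t.
Proof. intro H. now rewrite (functional_extensionality f g H). Qed.

(* A constant map factors through [T 1 = 1]. *)
Lemma mmap_const (HT1 : @T_one M) A B (c : B) (t : mT M A) : mmap (fun _ => c) t = meta c.
Proof.
  transitivity (mmap (fun _ : unit => c) (mmap (fun _ => tt) t)).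
  - now rewrite mmap_mmap.
  - now rewrite (HT1 (mmap (fun _ => tt) t) (meta tt)), meta_nat.
Qed.

End MonadFacts.

Lemma section_of_surj {A B : Type} (r : A -> B) :
  (forall b, exists a, r a = b) -> exists s : B -> A, forall b, r (s b) = b.
Proof.
  intro H. exists (fun b => proj1_sig (constructive_indefinite_description _ (H b))).
  intro b. exact (proj2_sig (constructive_indefinite_description _ (H b))).
Qed.

Section TCategories.
Context {Q : Quantale} {M : SetMonad} (Th : TopTheory Q M) (HT1 : @T_one M)
  (HTpb : @T_weak_pullbacks M).
Local Notation T := (mT M).

Lemma xi_const A (v : Q) (t : T A) : xi Th (mmap (fun _ => v) t) = v.
Proof. rewrite (mmap_const HT1). apply xi_eta. Qed.

(* Naturality of [xi] for the folding map [A + A -> A], with [phi] on the left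
   and [psi] on the right summand, exhibits [xi (T phi t)] as one of the terms
   of the supremum [xi (T (phi \/ psi) t) = xi (T psi t)]. *)
Lemma xi_mono A (phi psi : A -> Q) (t : T A) :
  (forall x, qle (phi x) (psi x)) -> qle (xi Th (mmap phi t)) (xi Th (mmap psi t)).
Proof.
  intro H.
  pose (fold := fun s : A + A => match s with inl a => a | inr a => a end).
  pose (phipsi := fun s : A + A => match s with inl a => phi a | inr a => psi a end).
  assert (Hfold : PV fold phipsi = psi).
  { apply functional_extensionality. intro y. apply qle_antisym.
    - apply qsup_least. intros w [[a | a] [<- ->]]; [apply H | apply qle_refl].
    - apply qsup_ub. exists (inr y). split; reflexivity. }
  rewrite <- Hfold, <- xi_nat. apply qsup_ub. exists (mmap inl t). split.
  - rewrite mmap_mmap. apply mmap_id.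
  - now rewrite mmap_mmap.
Qed.

Lemma xi_qten A (phi psi : A -> Q) (t : T A) :
  xi Th (mmap (fun z => qten (phi z) (psi z)) t)
  = qten (xi Th (mmap phi t)) (xi Th (mmap psi t)).
Proof.
  pose proof (xi_ten Q M Th (mmap (fun z => (phi z, psi z)) t)) as H.
  now rewrite !mmap_mmap in H.
Qed.

Lemma xi_ge_k A (phi : A -> Q) (t : T A) :
  (forall x, qle qk (phi x)) -> qle qk (xi Th (mmap phi t)).
Proof. intro H. rewrite <- (xi_const A qk t) at 1. now apply xi_mono. Qed.

Lemma Txi_ge {X Y} (r : Vrel X Y) (tw : T (X * Y)) :
  qle (xi Th (mmap (fun p => r (fst p) (snd p)) tw)) (Txi Th r (mmap fst tw) (mmap snd tw)).
Proof. apply qsup_ub. exists tw. auto. Qed.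

Lemma Txi_le {X Y} (r : Vrel X Y) tx ty w :
  (forall tw : T (X * Y), mmap fst tw = tx -> mmap snd tw = ty ->
     qle (xi Th (mmap (fun p => r (fst p) (snd p)) tw)) w) ->
  qle (Txi Th r tx ty) w.
Proof. intro H. apply qsup_least. intros s [tw [H1 [H2 ->]]]. auto. Qed.

Lemma Txi_mono {X Y X' Y'} (r : Vrel X Y) (r' : Vrel X' Y') (F : X -> X') (G : Y -> Y') tx ty :
  (forall u v, qle (r u v) (r' (F u) (G v))) ->
  qle (Txi Th r tx ty) (Txi Th r' (mmap F tx) (mmap G ty)).
Proof.
  intro H. apply Txi_le. intros tw <- <-.
  pose (tw' := mmap (fun p => (F (fst p), G (snd p))) tw).
  replace (mmap F (mmap fst tw)) with (mmap fst tw') by (unfold tw'; now rewrite !mmap_mmap).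
  replace (mmap G (mmap snd tw)) with (mmap snd tw') by (unfold tw'; now rewrite !mmap_mmap).
  eapply qle_trans; [| apply Txi_ge].
  unfold tw'. rewrite mmap_mmap. apply xi_mono. intro p. apply H.
Qed.

Lemma Txi_meta {X Y} (r : Vrel X Y) u v : qle (r u v) (Txi Th r (meta u) (meta v)).
Proof.
  pose proof (Txi_ge r (meta (u, v))) as H. now rewrite !meta_nat, xi_eta in H.
Qed.

Lemma xi_le_Txi_meta_l {X Y} (r : Vrel X Y) c t :
  qle (xi Th (mmap (fun y => r c y) t)) (Txi Th r (meta c) t).
Proof.
  pose proof (Txi_ge r (mmap (fun y => (c, y)) t)) as H.
  rewrite !mmap_mmap in H; cbn in H. now rewrite (mmap_const HT1), mmap_id in H.
Qed.

Lemma xi_le_Txi_meta_r {X Y} (r : Vrel X Y) c t :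
  qle (xi Th (mmap (fun y => r y c) t)) (Txi Th r t (meta c)).
Proof.
  pose proof (Txi_ge r (mmap (fun y => (y, c)) t)) as H.
  rewrite !mmap_mmap in H; cbn in H. now rewrite (mmap_const HT1), mmap_id in H.
Qed.

Lemma kcomp_ge {X Y Z} (b : Trel Y Z) (a : Trel X Y) tx (tY : T (T X)) y z :
  mmu tY = tx -> qle (qten (Txi Th a tY y) (b y z)) (kcomp Th b a tx z).
Proof.
  intro Hm. eapply qle_trans; [| apply qsup_ub; exists y; reflexivity].
  apply qten_mono_l.
  eapply qle_trans; [| apply qsup_ub; exists tY; reflexivity].
  rewrite <- (qten_k _ (Txi Th a tY y)) at 1.
  apply qten_mono_l, qsup_ub. auto.
Qed.

Lemma kcomp_le {X Y Z} (b : Trel Y Z) (a : Trel X Y) tx z w :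
  (forall (tY : T (T X)) y, mmu tY = tx -> qle (qten (Txi Th a tY y) (b y z)) w) ->
  qle (kcomp Th b a tx z) w.
Proof.
  intro H. apply qsup_least. intros w' [y ->].
  apply qten_supl_le. intros s [tY ->].
  rewrite <- qten_assoc. apply qten_supl_le. intros s [Hm ->]. rewrite qten_k. auto.
Qed.

Lemma tstr_trans (X : @TGraph Q M) (HX : is_TCat Th X) (tY : T (T (tcar X))) tx y z :
  mmu tY = tx -> qle (qten (Txi Th (tstr X) tY y) (tstr X y z)) (tstr X tx z).
Proof. intro Hm. eapply qle_trans; [apply kcomp_ge; exact Hm | apply (proj2 HX)]. Qed.

Lemma tstr_trans_meta (X : @TGraph Q M) (HX : is_TCat Th X) tx x z :
  qle (qten (tstr X tx x) (tstr X (meta x) z)) (tstr X tx z).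
Proof.
  eapply qle_trans; [apply qten_mono_l, Txi_meta | apply tstr_trans; auto].
  apply mmu_meta.
Qed.

Lemma TFun_comp {X Y Z : @TGraph Q M} {f : tcar X -> tcar Y} {g : tcar Y -> tcar Z} :
  is_TFun X Y f -> is_TFun Y Z g -> is_TFun X Z (fun x => g (f x)).
Proof.
  intros Hf Hg tx x. eapply qle_trans; [apply Hf |]. eapply qle_trans; [apply Hg |].
  rewrite mmap_mmap. apply qle_refl.
Qed.

Definition pt_le (X : @TGraph Q M) (x y : tcar X) : Prop := qle qk (tstr X (meta x) y).

Lemma TFun_pt_le (X Y : @TGraph Q M) (f : tcar X -> tcar Y) x y :
  is_TFun X Y f -> pt_le X x y -> pt_le Y (f x) (f y).
Proof. intros Hf H. unfold pt_le. rewrite <- meta_nat. eapply qle_trans; [exact H | apply Hf]. Qed.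

Definition unitTG : @TGraph Q M := {| tcar := unit; tstr := fun _ _ => qk |}.

Lemma unitTG_TCat : is_TCat Th unitTG.
Proof.
  split; [intro; apply qle_refl |].
  intros tx z. apply kcomp_le. intros tY y _. simpl. rewrite qten_k_r.
  apply Txi_le. intros tw _ _. simpl. rewrite xi_const. apply qle_refl.
Qed.

(* Points of a T-category are T-functors from [unitTG]. *)
Lemma L_separated_antisym (Z : @TGraph Q M) (HZ : is_TCat Th Z) (HS : L_separated Th Z) z1 z2 :
  pt_le Z z1 z2 -> pt_le Z z2 z1 -> z1 = z2.
Proof.
  intros H12 H21.
  assert (Hconst : forall z, is_TFun unitTG Z (fun _ => z)).
  { intros z t u. simpl. rewrite (mmap_const HT1). apply (proj1 HZ). }
  exact (HS unitTG unitTG_TCat _ _ (Hconst z1) (Hconst z2) (fun _ => H12) (fun _ => H21) tt).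
Qed.

Lemma L_separated_of_antisym (Z : @TGraph Q M) :
  (forall z1 z2, pt_le Z z1 z2 -> pt_le Z z2 z1 -> z1 = z2) -> L_separated Th Z.
Proof. intros H W _ f g _ _ Hfg Hgf w. apply H; [apply Hfg | apply Hgf]. Qed.

Lemma TCat_initial (X R : @TGraph Q M) (HX : is_TCat Th X) (s : tcar R -> tcar X)
  (Hs : forall p q, tstr R p q = tstr X (mmap s p) (s q)) : is_TCat Th R.
Proof.
  split.
  - intro q. rewrite Hs, meta_nat. apply (proj1 HX).
  - intros tx z. apply kcomp_le. intros tY y Hm. rewrite !Hs.
    eapply qle_trans; [apply qten_mono_l, (Txi_mono (tstr R) (tstr X) (mmap s) s) |].
    + intros u v. rewrite Hs. apply qle_refl.
    + apply tstr_trans; auto. rewrite <- Hm. symmetry. apply mmu_nat.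
Qed.

Lemma Vgraph_TCat : is_TCat Th (Vgraph Th).
Proof.
  split.
  - intro v. simpl. rewrite xi_eta. apply qimp_intro. rewrite qten_k. apply qle_refl.
  - intros tv v. apply kcomp_le. intros tV tu <-. simpl. apply qimp_intro.
    rewrite <- qten_assoc, (qten_comm _ (qimp _ _)), qten_assoc.
    eapply qle_trans; [apply qten_mono_l | rewrite qten_comm; apply qimp_counit].
    apply qten_supl_le. intros s [tw [<- [<- ->]]].
    rewrite <- xi_mu, mmap_mmap, <- xi_qten. apply xi_mono. intro p. apply qimp_counit.
Qed.

Lemma Vgraph_L_separated : L_separated Th (Vgraph Th).
Proof.
  apply L_separated_of_antisym. intros u v Huv Hvu. unfold pt_le in *; simpl in *.
  rewrite xi_eta in Huv, Hvu. apply qimp_elim in Huv. apply qimp_elim in Hvu.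
  rewrite qten_k in Huv, Hvu. now apply qle_antisym.
Qed.

Lemma surj_epi (P : @TGraph Q M -> Prop)
  (X Y : @TGraph Q M) (f : tcar X -> tcar Y) :
  (forall y, exists x, f x = y) -> is_epi_in Th P X Y f.
Proof. intros Hsurj Z _ _ g h _ _ E y. destruct (Hsurj y) as [x <-]. apply E. Qed.

Lemma reflection_of_ff_surj (X R : @TGraph Q M) (HX : is_TCat Th X) (HR : L_separated Th R)
  (r : tcar X -> tcar R) (Hff : forall tx x, tstr R (mmap r tx) (r x) = tstr X tx x)
  (Hsurj : forall w, exists x, r x = w) :
  is_reflection_in Th (L_separated Th) X R r.
Proof.
  destruct (section_of_surj r Hsurj) as [s Hs].
  assert (Hstr : forall p q, tstr R p q = tstr X (mmap s p) (s q)).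
  { intros p q. rewrite <- Hff, Hs, mmap_mmap, (mmap_ext _ _ _ (fun w => w) p Hs).
    now rewrite mmap_id. }
  assert (HRcat : is_TCat Th R) by exact (TCat_initial X R HX s Hstr).
  assert (Hiso : forall x1 x2, r x1 = r x2 -> pt_le X x1 x2).
  { intros x1 x2 E. unfold pt_le. rewrite <- Hff, meta_nat, E. apply (proj1 HRcat). }
  split; [exact HRcat |]. split; [exact HR |]. split.
  { intros tx x. rewrite Hff. apply qle_refl. }
  intros Z HZ HZsep f Hf. exists (fun w => f (s w)). split; [| split].
  - intros p q. rewrite Hstr. eapply qle_trans; [apply Hf |]. rewrite mmap_mmap. apply qle_refl.
  - intro x. apply (L_separated_antisym Z HZ HZsep); apply (TFun_pt_le X Z f _ _ Hf), Hiso;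
      [| symmetry]; apply Hs.
  - intros g' _ Hg' w. rewrite <- (Hs w) at 1. apply Hg'.
Qed.

Lemma yoneda_TFun_free (X : @TGraph Q M) (HX : is_TCat Th X) x :
  is_TFun (freeTG X) (Vgraph Th) (yoneda X x).
Proof.
  intros tX tx. apply qsup_least. intros w [<- ->].
  apply qimp_intro. rewrite qten_k.
  eapply qle_trans; [apply (xi_le_Txi_meta_r (tstr X) x tX) |].
  rewrite <- (qten_k_r (Txi Th (tstr X) tX (meta x))).
  eapply qle_trans; [apply qten_mono_r, (proj1 HX) | apply tstr_trans; auto].
Qed.

Lemma yoneda_TFun_op (X : @TGraph Q M) (HX : is_TCat Th X) x :
  is_TFun (Xop Th X) (Vgraph Th) (yoneda X x).
Proof.
  intros tX ty. simpl. apply qimp_intro. apply qten_supl_le.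
  intros s [tw [<- [Hsnd ->]]]. rewrite mmap_mmap, <- xi_qten.
  eapply qle_trans; [apply xi_mono with (psi := fun p => tstr X (snd p) x) |].
  - intro p. apply qten_supl_le. intros s [tY [Hm ->]]. apply tstr_trans; auto.
  - rewrite <- (mmap_mmap _ _ _ snd (fun y => tstr X y x)), Hsnd, meta_nat, xi_eta.
    apply qle_refl.
Qed.

Lemma LV_yoneda (X : @TGraph Q M) (HX : is_TCat Th X) (ylv : tcar X -> LVcar Th X)
  (Hy : forall x, proj1_sig (ylv x) = yoneda X x) tx x :
  tstr (LV Th X) (mmap ylv tx) (ylv x) = tstr X tx x.
Proof.
  apply qle_antisym.
  - eapply qle_trans.
    { apply qinf_lb. exists (mmap (fun x' => (meta x', ylv x')) tx).
      split; [now rewrite mmap_mmap | reflexivity]. }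
    rewrite !mmap_mmap. simpl. rewrite mmu_mmap_meta, Hy.
    apply qimp_le_k, xi_ge_k. intro x'. rewrite Hy. apply (proj1 HX).
  - apply qinf_glb. intros w [tq [Htq ->]]. apply qimp_intro.
    destruct (HTpb _ _ _ snd ylv tq tx Htq) as [tp [<- <-]].
    rewrite Hy, !mmap_mmap.
    rewrite (mmap_ext _ _ _ (fun z => tstr X (fst (fst (proj1_sig z))) (snd (proj1_sig z)))).
    2: { intros [[[u phi] x'] Hz]. simpl in *. now rewrite Hz, Hy. }
    rewrite qten_comm.
    eapply qle_trans; [| apply tstr_trans; [exact HX | reflexivity]].
    apply qten_mono_l.
    pose proof (Txi_ge (tstr X) (mmap (fun z => (fst (fst (proj1_sig z)), snd (proj1_sig z))) tp))
      as H.
    now rewrite !mmap_mmap in H.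
Qed.

Lemma yoneda_eq_of_iso (X : @TGraph Q M) (HX : is_TCat Th X) x1 x2 :
  pt_le X x1 x2 -> pt_le X x2 x1 -> yoneda X x1 = yoneda X x2.
Proof.
  assert (Hle : forall y1 y2 tx, pt_le X y1 y2 -> qle (tstr X tx y1) (tstr X tx y2)).
  { intros y1 y2 tx H. eapply qle_trans; [| apply (tstr_trans_meta X HX tx y1 y2)].
    rewrite <- (qten_k_r (tstr X tx y1)) at 1. now apply qten_mono_r. }
  intros H12 H21. apply functional_extensionality. intro tx.
  apply qle_antisym; apply Hle; assumption.
Qed.

Lemma yoneda_corestr_exists (X : @TGraph Q M) (HX : is_TCat Th X) :
  exists yc : tcar X -> tcar (YX Th X), is_yoneda_corestr Th X yc.
Proof.
  exists (fun x => exist _ (exist _ (exist _ (yoneda X x) (yoneda_TFun_free X HX x))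
                                 (yoneda_TFun_op X HX x))
                   (ex_intro _ x eq_refl)).
  intro x. reflexivity.
Qed.

Lemma YX_eq (X : @TGraph Q M) (w1 w2 : tcar (YX Th X)) :
  proj1_sig (proj1_sig (proj1_sig w1)) = proj1_sig (proj1_sig (proj1_sig w2)) -> w1 = w2.
Proof.
  intro H. do 3 (apply eq_sig_hprop; [intros; apply proof_irrelevance |]). exact H.
Qed.

Section Corestriction.
Variables (X : @TGraph Q M) (HX : is_TCat Th X) (yc : tcar X -> tcar (YX Th X)).
Hypothesis Hyc : is_yoneda_corestr Th X yc.

Lemma yc_ff tx x : tstr (YX Th X) (mmap yc tx) (yc x) = tstr X tx x.
Proof.
  change (tstr (LV Th X) (mmap (@proj1_sig _ _) (mmap (@proj1_sig _ _) (mmap yc tx)))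
            (proj1_sig (proj1_sig (yc x))) = tstr X tx x).
  rewrite !mmap_mmap. exact (LV_yoneda X HX (fun x => proj1_sig (proj1_sig (yc x))) Hyc tx x).
Qed.

Lemma yc_surj w : exists x, yc x = w.
Proof.
  destruct w as [w [x Hx]]. exists x. apply YX_eq. rewrite Hyc. symmetry. exact Hx.
Qed.

Lemma YX_L_separated : L_separated Th (YX Th X).
Proof.
  apply L_separated_of_antisym. intros w1 w2 H12 H21.
  destruct (yc_surj w1) as [x1 <-], (yc_surj w2) as [x2 <-].
  unfold pt_le in H12, H21. rewrite <- meta_nat, yc_ff in H12, H21.
  apply YX_eq. rewrite !Hyc. now apply yoneda_eq_of_iso.
Qed.

Lemma YX_reflection : is_reflection_in Th (L_separated Th) X (YX Th X) yc.
Proof. exact (reflection_of_ff_surj X (YX Th X) HX YX_L_separated yc yc_ff yc_surj). Qed.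

End Corestriction.

Lemma limit_L_separated (D : @Diagram Q M) (HD : diagram_in Th (L_separated Th) D) L p :
  is_limit_in Th (fun _ => True) D L p -> L_separated Th L.
Proof.
  intros [_ [_ [[Hp Hcomm] Hu]]] Z HZ f g Hf Hg Hfg Hgf z.
  assert (Hcone : is_cone D Z (fun i z => p i (f z))).
  { split; [intro i; exact (TFun_comp Hf (Hp i)) | intros e z'; apply Hcomm]. }
  destruct (Hu Z HZ I _ Hcone) as [u [_ [_ Huniq]]].
  transitivity (u z); [apply Huniq; auto |].
  symmetry. apply Huniq; [exact Hg |]. intros i z'.
  apply (proj2 (proj1 HD i) Z HZ (fun z => p i (g z)) (fun z => p i (f z)));
    [exact (TFun_comp Hg (Hp i)) | exact (TFun_comp Hf (Hp i)) | |];
    intro z''; apply (TFun_pt_le _ _ _ _ _ (Hp i)); [apply Hgf | apply Hfg].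
Qed.

Lemma limit_in_full_subcategory (P : @TGraph Q M -> Prop) (D : @Diagram Q M) L p :
  is_limit_in Th (fun _ => True) D L p -> P L -> is_limit_in Th P D L p.
Proof.
  intros [HL [_ [Hc Hu]]] HP. split; [exact HL |]. split; [exact HP |].
  split; [exact Hc |]. intros Z HZ _. exact (Hu Z HZ I).
Qed.

Lemma colimit_reflect (P : @TGraph Q M -> Prop) (D : @Diagram Q M) C c R (r : tcar C -> tcar R) :
  is_colimit_in Th (fun _ => True) D C c -> is_reflection_in Th P C R r ->
  is_colimit_in Th P D R (fun i x => r (c i x)).
Proof.
  intros [_ [_ [[Hc Hcomm] Hu]]] [HR [HPR [Hr Hrefl]]].
  split; [exact HR |]. split; [exact HPR |]. split.
  { split; [intro i; exact (TFun_comp (Hc i) Hr) | intros e x; now rewrite Hcomm]. }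
  intros Z HZ HPZ q Hq.
  destruct (Hu Z HZ I q Hq) as [u [Hu1 [Huc Huuniq]]].
  destruct (Hrefl Z HZ HPZ u Hu1) as [g [Hg [Hgr Hguniq]]].
  exists g. split; [exact Hg |]. split.
  - intros i x. rewrite Hgr. apply Huc.
  - intros u' Hu' Hu'c. apply Hguniq; [exact Hu' |].
    apply (Huuniq (fun x => u' (r x))); [exact (TFun_comp Hr Hu') | exact Hu'c].
Qed.

Section Density.
Variables (X Y : @TGraph Q M) (HY : is_TCat Th Y) (f : tcar X -> tcar Y).

Lemma kcomp_fdown_fup_le ty y : qle (kcomp Th (@fdown _ _ X Y f) (@fup _ _ X Y f) ty y) (tstr Y ty y).
Proof.
  apply kcomp_le. intros tY tx Hm.
  eapply qle_trans; [apply qten_mono_l, (Txi_mono _ (tstr Y) (fun u => u) f) |].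
  - intros u v. apply qle_refl.
  - rewrite mmap_id. apply tstr_trans; auto.
Qed.

Lemma L_dense_pt_le (Z : @TGraph Q M) (HZ : is_TCat Th Z) (HD : L_dense Th X Y f)
  (g h : tcar Y -> tcar Z) :
  is_TFun Y Z g -> is_TFun Y Z h -> (forall x, g (f x) = h (f x)) ->
  forall y, pt_le Z (h y) (g y).
Proof.
  intros Hg Hh E y. eapply qle_trans; [apply (proj1 HY y) |]. rewrite <- (HD (meta y) y).
  apply kcomp_le. intros tY tx Hm.
  apply qle_trans with (qten (Txi Th (tstr Z) (mmap (mmap h) tY) (mmap (fun x => h (f x)) tx))
                          (tstr Z (mmap (fun x => h (f x)) tx) (g y))).
  - apply qten_mono.
    + apply Txi_mono. intros u v. apply Hh.
    + eapply qle_trans; [apply Hg |]. rewrite mmap_mmap, (mmap_ext _ _ _ _ _ E). apply qle_refl.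
  - eapply qle_trans; [apply tstr_trans; [exact HZ | reflexivity] |].
    rewrite <- mmu_nat, Hm, meta_nat. apply qle_refl.
Qed.

Lemma L_dense_epi : L_dense Th X Y f -> is_epi_in Th (L_separated Th) X Y f.
Proof.
  intros HD Z HZ HZsep g h Hg Hh E y.
  apply (L_separated_antisym Z HZ HZsep); apply L_dense_pt_le; auto.
Qed.

Lemma tstr_row_TFun ty : is_TFun Y (Vgraph Th) (tstr Y ty).
Proof.
  intros ty' y'. simpl. apply qimp_intro. rewrite qten_comm.
  eapply qle_trans; [apply qten_mono_l, (xi_le_Txi_meta_l (tstr Y) ty ty') |].
  apply tstr_trans; auto. apply mmu_meta.
Qed.

(* [kan_ext phi y = sup_tx xi (T phi tx) (x) b(Tf tx, y)], written with [PV snd]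
   so that [xi_nat] applies to it. *)
Definition kan_ext (phi : tcar X -> Q) : tcar Y -> Q :=
  PV snd (fun p : T (tcar X) * tcar Y =>
            qten (xi Th (mmap phi (fst p))) (tstr Y (mmap f (fst p)) (snd p))).

Lemma kan_ext_TFun phi : is_TFun Y (Vgraph Th) (kan_ext phi).
Proof.
  intros ty' y'. simpl. apply qimp_intro. unfold kan_ext at 1.
  rewrite <- xi_nat. apply qten_supr_le. intros s [tp [<- ->]].
  rewrite xi_qten.
  assert (Hxi : xi Th (mmap (fun p => xi Th (mmap phi (fst p))) tp)
                = xi Th (mmap phi (mmu (mmap fst tp)))).
  { rewrite mmu_nat, <- xi_mu, !mmap_mmap. reflexivity. }
  assert (HTxi : qle (xi Th (mmap (fun p => tstr Y (mmap f (fst p)) (snd p)) tp))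
                     (Txi Th (tstr Y) (mmap (mmap f) (mmap fst tp)) (mmap snd tp))).
  { pose proof (Txi_ge (tstr Y) (mmap (fun p => (mmap f (fst p), snd p)) tp)) as H.
    rewrite !mmap_mmap in H. rewrite mmap_mmap. exact H. }
  rewrite Hxi.
  eapply qle_trans; [| apply qsup_ub; exists (mmu (mmap fst tp), y'); split; reflexivity].
  simpl. rewrite qten_comm, <- qten_assoc. apply qten_mono_r.
  eapply qle_trans; [apply qten_mono_l; exact HTxi |]. apply tstr_trans; auto.
  symmetry; apply mmu_nat.
Qed.

Lemma kan_ext_comp (g : tcar Y -> Q) :
  is_TFun Y (Vgraph Th) g -> forall x, kan_ext (fun x => g (f x)) (f x) = g (f x).
Proof.
  intros Hg x. apply qle_antisym.
  - apply qsup_least. intros w [[tx y] [Hy ->]]. simpl in Hy |- *. subst y.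
    pose proof (Hg (mmap f tx) (f x)) as H. simpl in H.
    apply qimp_elim in H. rewrite mmap_mmap in H. now rewrite qten_comm.
  - eapply qle_trans; [| apply qsup_ub; exists (meta x, f x); split; reflexivity].
    simpl. rewrite !meta_nat, xi_eta.
    rewrite <- (qten_k_r (g (f x))) at 1. apply qten_mono_r, (proj1 HY).
Qed.

Lemma kan_ext_row_le_kcomp ty y :
  qle (kan_ext (fun x => tstr Y ty (f x)) y) (kcomp Th (@fdown _ _ X Y f) (@fup _ _ X Y f) ty y).
Proof.
  apply qsup_least. intros w [[tx y'] [Hy ->]]. simpl in Hy |- *. subst y'.
  eapply qle_trans; [| apply kcomp_ge, mmu_meta].
  apply qten_mono_l, (xi_le_Txi_meta_l (fup f) ty tx).
Qed.

Lemma epi_L_dense : is_epi_in Th (L_separated Th) X Y f -> L_dense Th X Y f.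
Proof.
  intros Hepi ty y. apply qle_antisym; [apply kcomp_fdown_fup_le |].
  pose (g := tstr Y ty).
  assert (Hgh : g y = kan_ext (fun x => g (f x)) y).
  { apply (Hepi (Vgraph Th) Vgraph_TCat Vgraph_L_separated _ _
             (tstr_row_TFun ty) (kan_ext_TFun _)).
    intro x. symmetry. apply kan_ext_comp, tstr_row_TFun. }
  change (qle (g y) (kcomp Th (fdown f) (fup f) ty y)).
  rewrite Hgh. apply kan_ext_row_le_kcomp.
Qed.

End Density.

End TCategories.

Theorem mainTheorem17 (Q : Quantale) (M : SetMonad)
  (HT1 : @T_one M) (HTpb : @T_weak_pullbacks M) (Hmpb : @mu_weak_pullbacks M)
  (Th : TopTheory Q M) :
  (forall X : @TGraph Q M, is_TCat Th X ->
     exists yc : tcar X -> tcar (YX Th X), is_yoneda_corestr Th X yc) /\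
  (forall X : @TGraph Q M, is_TCat Th X ->
   forall yc : tcar X -> tcar (YX Th X), is_yoneda_corestr Th X yc ->
     is_reflection_in Th (L_separated Th) X (YX Th X) yc /\
     is_epi_in Th (fun _ => True) X (YX Th X) yc) /\
  (forall (D : @Diagram Q M), diagram_in Th (L_separated Th) D ->
   forall L p, is_limit_in Th (fun _ => True) D L p ->
     is_limit_in Th (L_separated Th) D L p) /\
  (forall (D : @Diagram Q M), diagram_in Th (L_separated Th) D ->
   forall C c, is_colimit_in Th (fun _ => True) D C c ->
   forall yc : tcar C -> tcar (YX Th C), is_yoneda_corestr Th C yc ->
     is_colimit_in Th (L_separated Th) D (YX Th C) (fun i x => yc (c i x))) /\
  (forall X Y : @TGraph Q M,
     is_TCat Th X -> L_separated Th X -> is_TCat Th Y -> L_separated Th Y ->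
   forall f : tcar X -> tcar Y, is_TFun X Y f ->
     (is_epi_in Th (L_separated Th) X Y f <-> L_dense Th X Y f)).
Proof.
  split; [exact (yoneda_corestr_exists Th HT1) |].
  split.
  { intros X HX yc Hyc. split.
    - exact (YX_reflection Th HT1 HTpb X HX yc Hyc).
    - exact (surj_epi Th _ X (YX Th X) yc (yc_surj Th X yc Hyc)). }
  split.
  { intros D HD L p HL. apply limit_in_full_subcategory; [exact HL |].
    exact (limit_L_separated Th D HD L p HL). }
  split.
  { intros D _ C c HC yc Hyc. apply colimit_reflect; [exact HC |].
    exact (YX_reflection Th HT1 HTpb C (proj1 HC) yc Hyc). }
  intros X Y _ _ HY _ f _. split; [apply epi_L_dense | apply L_dense_epi]; assumption.
Qed.
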